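(* Let $\mathcal{H}$ and $\mathcal{H}'$ be finite-dimensional Hilbert spaces, and let $\Phi:\mathcal{B}(\mathcal{H})\to\mathcal{B}(\mathcal{H}')$ be a quantum channel (a completely positive trace-preserving map). Let $\rho_{\text{in}}=\sum_{i=1}^{r}p_i|p_i\rangle\langle p_i|$ be a density matrix on $\mathcal{H}$ of rank $r$, where $\{|p_i\rangle\}_{i=1}^r$ are orthonormal, $0<p_i\leq 1$ and $\sum_{i=1}^r p_i=1$, and let $\rho_{\text{out}}=\Phi(\rho_{\text{in}})$. Define the information production $\Delta S\equiv S(\rho_{\text{out}})-S(\rho_{\text{in}})$ and the distribution $$\widetilde{P}(\sigma)\equiv\sum_{i=1}^{r}p_i\,\delta\big(\sigma-C(\Phi(|p_i\rangle\langle p_i|),\rho_{\text{out}})-\ln p_i\big),$$ i.e. $\sigma$ takes the value $\sigma_i=C(\Phi(|p_i\rangle\langle p_i|),\rho_{\text{out}})+\ln p_i$ with probability $p_i$, and write $\langle f(\sigma)\rangle_{\widetilde{P}}=\int d\sigma\,\widetilde{P}(\sigma)f(\sigma)=\sum_{i=1}^r p_i f(\sigma_i)$. Then $$\langle e^{-\sigma}\rangle_{\widetilde{P}}=\sum_{i=1}^{r}e^{-C(\Phi(|p_i\rangle\langle p_i|),\rho_{\text{out}})},$$ and consequently $\Delta S\geq L_{\text{otm}}$, where $$L_{\text{otm}}\equiv-\ln\Big(\sum_{i=1}^{r}e^{-C(\Phi(|p_i\rangle\langle p_i|),\rho_{\text{out}})}\Big).$$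
   Context: $\mathcal{B}(\mathcal{H})$ denotes the set of density matrices on $\mathcal{H}$. $S(\rho)\equiv-\mathrm{Tr}[\rho\ln\rho]$ is the von Neumann entropy. $C(\rho_1,\rho_2)\equiv-\mathrm{Tr}[\rho_1\ln\rho_2]$ is the quantum cross entropy of $\rho_1$ with respect to $\rho_2$; it is finite when $\mathrm{supp}(\rho_1)\subseteq\mathrm{supp}(\rho_2)$ (with $\ln\rho_2$ taken on the support of $\rho_2$) and equals $+\infty$ otherwise. Since $\rho_{\text{out}}=\sum_i p_i\Phi(|p_i\rangle\langle p_i|)$, each $C(\Phi(|p_i\rangle\langle p_i|),\rho_{\text{out}})$ is finite. *)

From HB Require Import structures.
From mathcomp Require Import all_boot all_order all_algebra.
From mathcomp Require Import sesquilinear spectral.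
From mathcomp.real_closed Require Import complex.
From mathcomp Require Import reals sequences exp.

Set Implicit Arguments.
Unset Strict Implicit.
Unset Printing Implicit Defensive.

Import Order.TTheory GRing.Theory Num.Theory ComplexField.
Local Open Scope ring_scope.
Local Open Scope sesquilinear_scope.

Section Quantum.
Variable R : realType.
Local Notation C := R[i].

Definition adjmx p q (M : 'M[C]_(p, q)) : 'M[C]_(q, p) := M ^t*.

Definition psd n (A : 'M[C]_n) : Prop :=
  A \is hermsymmx /\ forall v : 'cV[C]_n, 0 <= (adjmx v *m A *m v) 0 0.

Definition density n (rho : 'M[C]_n) : Prop := psd rho /\ \tr rho = 1.

Definition ketbra n (v : 'cV[C]_n) : 'M[C]_n := v *m adjmx v.

(* id_k (x) Phi acting on block matrices 'M_(k n) (k x k blocks of size n) *)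
Definition ampl n m k (Phi : 'M[C]_n -> 'M[C]_m)
  (X : 'M[C]_(\sum_(i < k) n)) : 'M[C]_(\sum_(i < k) m) :=
  \mxblock_(i < k, j < k) Phi (submxblock X i j).

Definition completely_positive n m (Phi : 'M[C]_n -> 'M[C]_m) : Prop :=
  forall k (X : 'M[C]_(\sum_(i < k) n)), psd X -> psd (ampl Phi X).

Definition trace_preserving n m (Phi : 'M[C]_n -> 'M[C]_m) : Prop :=
  forall X, \tr (Phi X) = \tr X.

Definition quantum_channel n m (Phi : {linear 'M[C]_n -> 'M[C]_m}) : Prop :=
  completely_positive Phi /\ trace_preserving Phi.

Definition ln_supp (x : R) : R := if 0 < x then ln x else 0.

(* matrix logarithm on the support, via the spectral decomposition
   A = U^-1 diag(d) U (U unitary) of the normal (here Hermitian) matrix A *)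
Definition mlog n (A : 'M[C]_n) : 'M[C]_n :=
  invmx (spectralmx A) *m
    diag_mx (map_mx (fun z : C => ((ln_supp (complex.Re z))%:C)%C) (spectral_diag A)) *m
    spectralmx A.

Definition vn_entropy n (rho : 'M[C]_n) : R := - complex.Re (\tr (rho *m mlog rho)).

(* quantum cross entropy C(rho1, rho2) = - Tr[rho1 ln rho2], ln taken on the
   support of rho2; this is the (finite) value when supp rho1 <= supp rho2 *)
Definition cross_entropy n (rho1 rho2 : 'M[C]_n) : R :=
  - complex.Re (\tr (rho1 *m mlog rho2)).

End Quantum.

From HB Require Import structures.
From mathcomp Require Import all_boot all_order all_algebra.
From mathcomp Require Import sesquilinear spectral.
From mathcomp.real_closed Require Import complex.
From mathcomp Require Import reals sequences exp.
Set Implicit Arguments.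
Unset Strict Implicit.
Unset Printing Implicit Defensive.

Import Order.TTheory GRing.Theory Num.Theory ComplexField.
Local Open Scope ring_scope.
Local Open Scope sesquilinear_scope.

(* As rho_in is diagonal in the
   orthonormal family |p_i>, S(rho_in) = - sum_i p_i ln p_i, while linearity of
   Phi and of the trace give S(rho_out) = C(rho_out, rho_out)
   = sum_i p_i C(Phi(|p_i><p_i|), rho_out); hence Delta S = <sigma>.  The
   identity for <e^-sigma> holds termwise, and Jensen's inequality for exp,
   e^-<sigma> <= <e^-sigma>, is exactly Delta S >= L_otm. *)

Section RealExp.
Variable R : realType.

Lemma mul_expRN_Dln (p c : R) : 0 < p -> p * expR (- (c + ln p)) = expR (- c).
Proof.
move=> p_gt0; rewrite opprD expRD [expR (- ln _)]expRN lnK ?posrE //.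
by rewrite mulrCA mulfV ?mulr1 // gt_eqF.
Qed.

Lemma expR_tangent_le (a x : R) : expR a * (1 + (x - a)) <= expR x.
Proof.
have -> : expR x = expR a * expR (x - a) by rewrite -expRD addrCA subrr addr0.
by rewrite ler_wpM2l ?expR_ge0 ?expR_ge1Dx.
Qed.

Lemma expR_mean_le (I : Type) (s : seq I) (w x : I -> R) :
  (forall i, 0 <= w i) -> \sum_(i <- s) w i = 1 ->
  expR (\sum_(i <- s) w i * x i) <= \sum_(i <- s) w i * expR (x i).
Proof.
move=> w_ge0 w_sum; set mu := \sum_(i <- s) _.
have -> : expR mu = \sum_(i <- s) w i * (expR mu * (1 + (x i - mu))).
  under eq_bigr do rewrite mulrCA mulrDr mulr1 mulrBr.
  by rewrite -mulr_sumr big_split sumrB /= -mulr_suml w_sum -/mu mul1r subrr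
             addr0 mulr1.
by apply: ler_sum => i _; rewrite ler_wpM2l ?expR_tangent_le.
Qed.

End RealExp.

Section Entropy.
Variable R : realType.
Local Notation C := R[i].

Lemma Re_sum (I : Type) (s : seq I) (F : I -> C) :
  complex.Re (\sum_(i <- s) F i) = \sum_(i <- s) complex.Re (F i).
Proof. exact: (raddf_sum (@complex.Re R : Rcomplex R -> R)). Qed.

Lemma Re_realM (x : R) (z : C) : complex.Re ((x%:C)%C * z) = x * complex.Re z.
Proof. by case: z => a b /=; rewrite mul0r subr0. Qed.

Lemma vn_entropyE n (rho : 'M[C]_n) : vn_entropy rho = cross_entropy rho rho.
Proof. by []. Qed.

Lemma cross_entropy_sum n (I : Type) (s : seq I) (c : I -> R)
    (A : I -> 'M[C]_n) (B : 'M[C]_n) :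
  cross_entropy (\sum_(i <- s) ((c i)%:C)%C *: A i) B =
  \sum_(i <- s) c i * cross_entropy (A i) B.
Proof.
rewrite /cross_entropy mulmx_suml (raddf_sum (@mxtrace _ n)) /= Re_sum -sumrN.
by apply: eq_bigr => i _; rewrite -scalemxAl mxtraceZ Re_realM mulrN.
Qed.

Lemma vn_entropy_linear_sum n m (Phi : {linear 'M[C]_n -> 'M[C]_m})
    (I : Type) (s : seq I) (c : I -> R) (X : I -> 'M[C]_n) :
  let rho := Phi (\sum_(i <- s) ((c i)%:C)%C *: X i) in
  vn_entropy rho = \sum_(i <- s) c i * cross_entropy (Phi (X i)) rho.
Proof.
move=> rho; rewrite vn_entropyE {1}/rho.
by rewrite (linear_sum Phi) -cross_entropy_sum; under eq_bigr do rewrite linearZ.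
Qed.

Lemma adjmx_ketbra n (v : 'cV[C]_n) : adjmx (ketbra v) = ketbra v.
Proof.
rewrite /ketbra /adjmx trmx_mul map_mxM map_trmx trmxK -map_mx_comp.
by rewrite (map_mx_id (@conjCK _)).
Qed.

Lemma normalmx_sum_ketbra n (I : Type) (s : seq I) (c : I -> R)
    (v : I -> 'cV[C]_n) :
  \sum_(i <- s) ((c i)%:C)%C *: ketbra (v i) \is normalmx.
Proof.
set A := \sum_(i <- s) _.
suff AE : A ^t* = A by apply/normalmxP; rewrite AE.
rewrite /A linear_sum map_mx_sum; apply: eq_bigr => i _.
rewrite linearZ map_mxZ /=.
by congr (_ *: _); [exact: conjc_real | exact: adjmx_ketbra].
Qed.

Lemma sum_ketbra_mul_ket n (I : finType) (v : I -> 'cV[C]_n) (c : I -> C) i :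
  (forall i j, adjmx (v i) *m v j = (i == j)%:R%:M) ->
  (\sum_j c j *: ketbra (v j)) *m v i = c i *: v i.
Proof.
move=> v_orthonormal; rewrite mulmx_suml (bigD1 i) //= big1 ?addr0.
  by rewrite -scalemxAl /ketbra -mulmxA v_orthonormal eqxx mulmx1.
move=> j /negbTE ji; rewrite -scalemxAl /ketbra -mulmxA v_orthonormal ji.
by rewrite mul_mx_scalar scale0r scaler0.
Qed.

Lemma diag_mx_map_eigen (F : fieldType) n k (f : F -> F) (d : 'rV[F]_n)
    (w : 'M[F]_(n, k)) (a : F) :
  diag_mx d *m w = a *: w -> diag_mx (map_mx f d) *m w = f a *: w.
Proof.
move=> /matrixP dw; apply/matrixP => i j; move: (dw i j).
rewrite !mul_diag_mx !mxE.
have [->|wij_neq0] := eqVneq (w i j) 0; first by rewrite !mulr0.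
by move/(mulIf wij_neq0) ->.
Qed.

Lemma mlog_eigen n (A : 'M[C]_n) (v : 'cV[C]_n) (x : R) :
  A \is normalmx -> 0 < x -> A *m v = (x%:C)%C *: v ->
  mlog A *m v = ((ln x)%:C)%C *: v.
Proof.
move=> /orthomx_spectralP AE x_gt0 Av.
set U := spectralmx A in AE *; set d := spectral_diag A in AE *.
have U_unit : U \in unitmx by exact: spectral_unit.
have UA : U *m A = diag_mx d *m U by rewrite {1}AE !mulmxA mulmxV ?mul1mx.
have dUv : diag_mx d *m (U *m v) = (x%:C)%C *: (U *m v).
  by rewrite mulmxA -UA -mulmxA Av scalemxAr.
rewrite /mlog -/U -/d -!mulmxA (diag_mx_map_eigen _ dUv) /= /ln_supp x_gt0.
by rewrite -scalemxAr mulKmx.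
Qed.

Lemma vn_entropy_sum_ketbra n (I : finType) (v : I -> 'cV[C]_n) (p : I -> R) :
  (forall i j, adjmx (v i) *m v j = (i == j)%:R%:M) -> (forall i, 0 < p i) ->
  vn_entropy (\sum_i ((p i)%:C)%C *: ketbra (v i)) = - \sum_i p i * ln (p i).
Proof.
move=> v_orthonormal p_gt0; set rho := \sum_i _.
have log_v i : mlog rho *m v i = ((ln (p i))%:C)%C *: v i.
  apply: mlog_eigen; [exact: normalmx_sum_ketbra | exact: p_gt0 |].
  exact: (sum_ketbra_mul_ket (fun j => ((p j)%:C)%C) i v_orthonormal).
rewrite vn_entropyE {1}/rho cross_entropy_sum.
rewrite -sumrN; apply: eq_bigr => i _; rewrite /cross_entropy /ketbra.
rewrite -mulmxA mxtrace_mulC -mulmxA log_v -scalemxAr v_orthonormal eqxx.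
by rewrite mxtraceZ mxtrace1 mulr1 mulrN.
Qed.

End Entropy.

Theorem theorem1 (R : realType) (n m r : nat)
  (Phi : {linear 'M[R[i]]_n -> 'M[R[i]]_m})
  (p : 'I_r -> R) (ket : 'I_r -> 'cV[R[i]]_n) :
  quantum_channel Phi ->
  (forall i j, adjmx (ket i) *m ket j = (i == j)%:R%:M) ->
  (forall i, 0 < p i <= 1) ->
  \sum_(i < r) p i = 1 ->
  let rho_in := \sum_(i < r) ((p i)%:C)%C *: ketbra (ket i) in
  let rho_out := Phi rho_in in
  let Cr i := cross_entropy (Phi (ketbra (ket i))) rho_out in
  let sigma i := Cr i + ln (p i) in
  let Delta_S := vn_entropy rho_out - vn_entropy rho_in in
  let L_otm := - ln (\sum_(i < r) expR (- Cr i)) in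
  \sum_(i < r) p i * expR (- sigma i) = \sum_(i < r) expR (- Cr i) /\
  L_otm <= Delta_S.
Proof.
move=> _ ket_orthonormal p_bound p_sum rho_in rho_out Cr sigma Delta_S L_otm.
have p_gt0 i : 0 < p i by case/andP: (p_bound i).
have mean_exp : \sum_(i < r) p i * expR (- sigma i) = \sum_(i < r) expR (- Cr i).
  by apply: eq_bigr => i _; exact: mul_expRN_Dln.
split=> //.
have Delta_mean : Delta_S = \sum_(i < r) p i * sigma i.
  rewrite /Delta_S vn_entropy_linear_sum.
  rewrite (vn_entropy_sum_ketbra ket_orthonormal p_gt0) opprK -big_split.
  by apply: eq_bigr => i _; rewrite mulrDr.
have jensen : expR (- \sum_(i < r) p i * sigma i) <= \sum_(i < r) expR (- Cr i).
  rewrite -mean_exp -sumrN; under eq_bigr do rewrite -mulrN.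
  exact: expR_mean_le (fun i => ltW (p_gt0 i)) p_sum.
rewrite /L_otm Delta_mean lerNl -ler_expR lnK // posrE.
exact: lt_le_trans (expR_gt0 _) jensen.
Qed.
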